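(* Let $n\ge 1$, let $T_{n+2}$ be a tournament (strong preference pattern) on a set of $n+2$ candidates, let $a,b$ be two of these candidates, and let $T_n=T_{n+2}\setminus\{a,b\}$ be the subtournament induced on the remaining $n$ candidates. Then $v(T_{n+2})\le v(T_n)+2$.
   Context: A voter on a finite candidate set $A$ is a linear order (ranking) of $A$. A set of voters is a nonempty finite multiset of voters. A strong preference pattern on $A$ is a tournament $T$ on vertex set $A$. A set of voters $U$ generates $T$ if for every pair of distinct candidates $x,y$, the arc $(x,y)$ is in $T$ if and only if strictly more voters of $U$ rank $x$ above $y$ than rank $y$ above $x$. For a tournament $T$, $v(T)$ denotes the minimum size of a set of voters generating $T$. *)

From mathcomp Require Import all_boot.
Set Implicit Arguments. Unset Strict Implicit. Unset Printing Implicit Defensive.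

(* A voter on a finite candidate set A is a linear order on A, represented
   by an injective ranking function r : A -> nat;  x is ranked above y
   iff r x < r y.  (Every strict linear order on a finite set arises so.) *)
Record voter (A : finType) := Voter { rank_of : A -> nat; rank_inj : injective rank_of }.

Definition prefers (A : finType) (u : voter A) (x y : A) : bool := rank_of u x < rank_of u y.

Definition tournament (A : finType) (T : rel A) : Prop :=
  (forall x, ~~ T x x) /\ (forall x y, x != y -> T x y (+) T y x).

(* A set of voters: nonempty finite multiset, given as a nonempty list. *)
Definition generates (A : finType) (U : seq (voter A)) (T : rel A) : Prop :=
  0 < size U /\
  forall x y : A, x != y ->
    T x y = (count (fun u => prefers u y x) U < count (fun u => prefers u x y) U).

Definition is_v (A : finType) (T : rel A) (k : nat) : Prop :=
  (exists U, generates U T /\ size U = k) /\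
  (forall U, generates U T -> k <= size U).

Definition rest (A : finType) (a b : A) := {x : A | (x != a) && (x != b)}.
Definition subT (A : finType) (a b : A) (T : rel A) : rel (rest a b) :=
  fun x y => T (val x) (val y).

From mathcomp Require Import all_boot.
From mathcomp Require Import zify.
Set Implicit Arguments. Unset Strict Implicit. Unset Printing Implicit Defensive.

(* A profile generating the subtournament may be assumed to have odd size 2m+1:
   for even size all margins are even and nonzero, so one voter can be dropped.
   Extend m+1 of its voters by putting a and b on top (in the order given by T)
   and the other m by putting them at the bottom (in the opposite order).  Pairs
   inside the rest keep their margins, (a, b) gets margin one in the right
   direction, and each pair (c, z) with c in {a, b} gets margin one in favour
   of c.  Two more voters, reverse to each other on the rest, cancel there and
   on (a, b); both rank z above c when z beats c and they split otherwise, which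
   corrects the pairs (c, z). *)

Lemma count_const (C : Type) (p : bool) (s : seq C) : count (fun _ => p) s = p * size s.
Proof. by elim: s => [|_ s IHs] /=; rewrite ?muln0 // IHs mulnS. Qed.

Section Votes.
Variable B : finType.

Definition votes (U : seq (voter B)) (x y : B) : nat :=
  count (fun u => prefers u x y) U.

Lemma prefers_swap (u : voter B) x y : x != y -> prefers u y x = ~~ prefers u x y.
Proof.
move=> xy; rewrite /prefers; case: ltngtP => // /rank_inj eq_yx.
by rewrite eq_yx eqxx in xy.
Qed.

Lemma votesC U x y : x != y -> votes U x y + votes U y x = size U.
Proof.
move=> xy; elim: U => //= u U; rewrite /votes /= (prefers_swap u xy).
by case: (prefers u x y) => /=; lia.
Qed.

Lemma votes_neq U x y : odd (size U) -> x != y -> votes U x y != votes U y x.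
Proof.
move=> oddU xy; apply: contraTneq oddU => eq_votes.
by rewrite -(votesC U xy) eq_votes addnn odd_double.
Qed.

Variable T : rel B.
Hypothesis tourT : tournament T.

Lemma tournamentN x y : x != y -> T y x = ~~ T x y.
Proof. by move=> xy; have := tourT.2 x y xy; case: (T x y); case: (T y x). Qed.

Lemma majority_swap U x y : odd (size U) -> x != y ->
  T x y = (votes U y x < votes U x y) -> T y x = (votes U x y < votes U y x).
Proof.
move=> oddU xy Txy; rewrite tournamentN // Txy -leqNgt leq_eqVlt.
by rewrite (negbTE (votes_neq oddU xy)).
Qed.

Lemma generates_behead u U : generates (u :: U) T -> odd (size U) -> generates U T.
Proof.
move=> [_ genU] oddU; split; first exact: odd_gt0.
have {}genU x y : x != y -> T x y = (votes (u :: U) y x < votes (u :: U) x y).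
  exact: genU.
move=> x y xy; have yx : y != x by rewrite eq_sym.
have margin_neq : votes (u :: U) x y != votes (u :: U) y x.
  apply: contraTneq (tourT.2 x y xy) => eq_votes.
  by rewrite (genU x y xy) (genU y x yx) eq_votes ltnn.
move: margin_neq (genU x y xy) (votes_neq oddU xy).
rewrite /votes /= -/(votes U x y) -/(votes U y x) prefers_swap //.
by case: (prefers u x y) => /= + ->; lia.
Qed.

Lemma generates_odd U : generates U T ->
  exists U', [/\ generates U' T, odd (size U') & size U' <= size U].
Proof.
case oddU: (odd (size U)) => genU; first by exists U.
case: U genU oddU => [[]//|u U] genU /= /negbT; rewrite negbK => oddU.
by exists U; split=> //; apply: generates_behead genU oddU.
Qed.

End Votes.

Lemma tournament_subT (A : finType) (T : rel A) (a b : A) :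
  tournament T -> tournament (subT (a := a) (b := b) T).
Proof.
move=> [irrT totT]; split=> [x|x y xy]; first exact: irrT.
by apply: totT; rewrite (inj_eq val_inj).
Qed.

Section Extension.
Variables (A : finType) (T : rel A) (a b : A).
Hypotheses (tourT : tournament T) (ab : a != b).
Local Notation R := (rest a b).

Definition outer (x : A) : bool := (x == a) || (x == b).

Lemma outerN_rest x : ~~ outer x -> exists z : R, x = val z.
Proof. by rewrite negb_or => xab; exists (Sub x xab). Qed.

Lemma outerN_val (z : R) : outer (val z) = false.
Proof. by have /andP[za zb] := valP z; rewrite /outer (negbTE za) (negbTE zb). Qed.

Definition extend (f : R -> nat) (ra rb : nat) (x : A) : nat :=
  if x == a then ra else if x == b then rb else oapp f 0 (insub x).

Lemma extend_val f ra rb (z : R) : extend f ra rb (val z) = f z.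
Proof. by have /andP[za zb] := valP z; rewrite /extend (negbTE za) (negbTE zb) valK. Qed.

Lemma extend_a f ra rb : extend f ra rb a = ra.
Proof. by rewrite /extend eqxx. Qed.

Lemma extend_b f ra rb : extend f ra rb b = rb.
Proof. by rewrite /extend eq_sym (negbTE ab) eqxx. Qed.

Lemma extend_inj f ra rb : injective f -> ra != rb ->
  (forall z, f z != ra) -> (forall z, f z != rb) -> injective (extend f ra rb).
Proof.
move=> f_inj rab fa fb x y.
have [/orP[]/eqP-> | /outerN_rest[z ->]] := boolP (outer x);
have [/orP[]/eqP-> | /outerN_rest[t ->]] := boolP (outer y);
rewrite ?extend_a ?extend_b ?extend_val // => e.
- by rewrite e eqxx in rab.
- by move: (fa t); rewrite e eqxx.
- by rewrite e eqxx in rab.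
- by move: (fb t); rewrite e eqxx.
- by move: (fa z); rewrite e eqxx.
- by move: (fb z); rewrite e eqxx.
- by rewrite (f_inj _ _ e).
Qed.

Lemma top_rank_inj (u : voter R) :
  injective (extend (fun z => (rank_of u z).+2) (~~ T a b) (T a b)).
Proof.
apply: extend_inj => [z t [] /rank_inj // | | z | z]; by case: (T a b).
Qed.

Definition top (u : voter R) : voter A := Voter (@top_rank_inj u).

Definition rank_bound (u : voter R) : nat := (\max_(z : R) rank_of u z).+1.

Lemma rank_bound_gt u z : rank_of u z < rank_bound u.
Proof. by rewrite ltnS (leq_bigmax (F := rank_of u)). Qed.

Lemma bot_rank_inj (u : voter R) : injective
  (extend (rank_of u) (rank_bound u + T a b) (rank_bound u + ~~ T a b)).
Proof.
apply: extend_inj => [| | z | z]; first exact: rank_inj; first by case: (T a b); lia.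
all: by move: (rank_bound_gt u z); case: (T a b); lia.
Qed.

Definition bot (u : voter R) : voter A := Voter (@bot_rank_inj u).

Lemma top_rest u (x y : R) : prefers (top u) (val x) (val y) = prefers u x y.
Proof. by rewrite /prefers /= !extend_val ltnS ltnS. Qed.

Lemma bot_rest u (x y : R) : prefers (bot u) (val x) (val y) = prefers u x y.
Proof. by rewrite /prefers /= !extend_val. Qed.

Lemma top_outer_rest u c (z : R) : outer c -> prefers (top u) c (val z).
Proof.
by case/orP=> /eqP->; rewrite /prefers /= extend_val ?extend_a ?extend_b; case: (T a b).
Qed.

Lemma bot_outer_rest u c (z : R) : outer c -> prefers (bot u) c (val z) = false.
Proof.
case/orP=> /eqP->; rewrite /prefers /= extend_val ?extend_a ?extend_b;
by move: (rank_bound_gt u z); case: (T a b); lia.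
Qed.

Lemma outer_pair x y : outer x -> outer y -> x != y -> (x, y) = (a, b) \/ (x, y) = (b, a).
Proof. by case/orP=> /eqP-> /orP[]/eqP->; rewrite ?eqxx; [|left|right|]. Qed.

Lemma top_outer u x y : outer x -> outer y -> x != y -> prefers (top u) x y = T x y.
Proof.
move=> ox oy xy; have [[-> ->]|[-> ->]] := outer_pair ox oy xy;
rewrite /prefers /= !extend_a !extend_b ?(tournamentN tourT ab); by case: (T a b).
Qed.

Lemma bot_outer u x y : outer x -> outer y -> x != y -> prefers (bot u) x y = T y x.
Proof.
move=> ox oy xy; have [[-> ->]|[-> ->]] := outer_pair ox oy xy;
rewrite /prefers /= !extend_a !extend_b ?(tournamentN tourT ab); by case: (T a b); lia.
Qed.

(* The class of z records which of a and b it beats; the class voter lists the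
   rest by class 0 (beats a only), 1 (beats both), 2 (beats b only),
   3 (beats neither), with a between classes 1 and 2 and b between classes 2
   and 3.  Its reverse lists the rest backwards, with b between classes 1 and 0
   and a last.  Blocks have length #|R|.+1, which leaves a free slot for a and b. *)
Definition cls (z : R) : nat :=
  if T (val z) a then (if T (val z) b then 1 else 0) else (if T (val z) b then 2 else 3).

Let M := #|{: R}|.

Definition key (z : R) : nat := cls z * M.+1 + enum_rank z.

Lemma key_inj : injective key.
Proof.
have keyK z : key z %% M.+1 = enum_rank z by rewrite modnMDl modn_small // ltnS ltnW.
by move=> z t e; apply: enum_rank_inj; apply: val_inj; rewrite /= -keyK e keyK.
Qed.

Lemma key_spec z : exists2 i, i < M & key z = cls z * M.+1 + i.
Proof. by exists (enum_rank z). Qed.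

Lemma class_rank_inj : injective (extend key (M.+1 + M) (2 * M.+1 + M)).
Proof.
apply: extend_inj => [||z|z]; [exact: key_inj | lia | |];
by have [i ltiM ->] := key_spec z; rewrite /cls; case: ifP; case: ifP; lia.
Qed.

Definition class_voter : voter A := Voter class_rank_inj.

Lemma rev_class_rank_inj :
  injective (extend (fun z => 4 * M.+1 - key z) (4 * M.+1 + 1) (3 * M.+1 + 1)).
Proof.
have key_lt z : key z < 4 * M.+1.
  by have [i ltiM ->] := key_spec z; rewrite /cls; case: ifP; case: ifP; lia.
apply: extend_inj => [z t e | | z | z].
- by apply: key_inj; move: (key_lt z) (key_lt t) e; lia.
- by lia.
- by move: (key_lt z); lia.
- by have [i ltiM ->] := key_spec z; rewrite /cls; case: ifP; case: ifP; lia.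
Qed.

Definition rev_class_voter : voter A := Voter rev_class_rank_inj.

Lemma rev_class_voter_rest (x y : R) :
  prefers rev_class_voter (val x) (val y) = prefers class_voter (val y) (val x).
Proof.
rewrite /prefers /= !extend_val.
by have [i ? ->] := key_spec x; have [j ? ->] := key_spec y; rewrite /cls;
  do 4! case: ifP; lia.
Qed.

Lemma class_voters_outer x y : outer x -> outer y -> x != y ->
  prefers class_voter x y + prefers rev_class_voter x y = 1.
Proof.
move=> ox oy xy; have [[-> ->]|[-> ->]] := outer_pair ox oy xy;
by rewrite /prefers /= !extend_a !extend_b; lia.
Qed.

Lemma class_voters_outer_rest c (z : R) : outer c ->
  prefers class_voter c (val z) + prefers rev_class_voter c (val z) = ~~ T (val z) c.
Proof.
have [i ltiM key_z] := key_spec z; case/orP=> /eqP->;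
by rewrite /prefers /= !extend_val ?extend_a ?extend_b key_z /cls;
  case: ifP; case: ifP; lia.
Qed.

Variables U1 U2 : seq (voter R).

Definition extension : seq (voter A) :=
  class_voter :: rev_class_voter :: map top U1 ++ map bot U2.

Lemma votes_extension x y : votes extension x y =
  prefers class_voter x y + prefers rev_class_voter x y +
  count (fun u => prefers (top u) x y) U1 + count (fun u => prefers (bot u) x y) U2.
Proof. by rewrite /votes /= count_cat !count_map !addnA. Qed.

Lemma votes_extension_rest x y : x != y ->
  votes extension (val x) (val y) = (votes (U1 ++ U2) x y).+1.
Proof.
move=> xy; have vxy : val x != val y by rewrite (inj_eq val_inj).
rewrite votes_extension rev_class_voter_rest prefers_swap 1?eq_sym // addn_negb.
rewrite (eq_count (fun u => @top_rest u x y)) (eq_count (fun u => @bot_rest u x y)).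
by rewrite /votes count_cat.
Qed.

Lemma votes_extension_outer x y : outer x -> outer y -> x != y ->
  votes extension x y = (if T x y then size U1 else size U2).+1.
Proof.
move=> ox oy xy; rewrite votes_extension class_voters_outer //.
rewrite (eq_count (fun u => @top_outer u x y ox oy xy)).
rewrite (eq_count (fun u => @bot_outer u x y ox oy xy)) !count_const.
by rewrite (tournamentN tourT xy); case: (T x y); rewrite /= ?mul0n ?mul1n ?addn0.
Qed.

Lemma votes_extension_outer_rest c (z : R) : outer c ->
  votes extension c (val z) = ~~ T (val z) c + size U1.
Proof.
move=> oc; rewrite votes_extension class_voters_outer_rest //.
rewrite (eq_count (fun u => @top_outer_rest u c z oc)).
by rewrite (eq_count (fun u => @bot_outer_rest u c z oc)) count_predT count_pred0 addn0.
Qed.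

Lemma generates_extension : size U1 = (size U2).+1 ->
  generates (U1 ++ U2) (subT T) -> generates extension T.
Proof.
move=> size_U1 [_ genU]; split=> // x y xy.
change (T x y = (votes extension y x < votes extension x y)).
have size_ext : size extension = (size U2).*2.+3.
  by rewrite /= size_cat !size_map size_U1 addSn addnn.
have odd_ext : odd (size extension) by rewrite size_ext /= odd_double.
have outer_rest c (z : R) :
    outer c -> T c (val z) = (votes extension (val z) c < votes extension c (val z)).
  move=> oc; have cz : c != val z by apply: contraTneq oc => ->; rewrite outerN_val.
  move: (votesC extension cz); rewrite votes_extension_outer_rest // size_ext.
  by rewrite (tournamentN tourT cz) size_U1; case: (T c (val z)) => /=; lia.
case ox: (outer x); case oy: (outer y).
- have yx : y != x by rewrite eq_sym.
  rewrite !votes_extension_outer // (tournamentN tourT xy).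
  by rewrite size_U1; case: (T x y) => /=; lia.
- by have [z ->] := outerN_rest (negbT oy); apply: outer_rest.
- have [z ex] := outerN_rest (negbT ox); subst x; rewrite eq_sym in xy.
  exact: (majority_swap tourT odd_ext xy (outer_rest y z oy)).
- have [x' ex] := outerN_rest (negbT ox); have [y' ey] := outerN_rest (negbT oy).
  subst x y; have xy' : x' != y' by apply: contraNneq xy => ->.
  have yx' : y' != x' by rewrite eq_sym.
  by rewrite !votes_extension_rest // ltnS; apply: genU.
Qed.

End Extension.

Lemma extension_exists (A : finType) (T : rel A) (a b : A) (U : seq (voter (rest a b))) :
  tournament T -> a != b -> odd (size U) -> generates U (subT T) ->
  exists P : seq (voter A), generates P T /\ size P = (size U).+2.
Proof.
move=> tourT ab oddU genU; set m := (size U)./2.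
have size_U : size U = m.*2.+1 by rewrite -[LHS]odd_double_half oddU.
have size_take : size (take m.+1 U) = (size (drop m.+1 U)).+1.
  by rewrite size_drop size_takel size_U; lia.
exists (extension T ab (take m.+1 U) (drop m.+1 U)); split.
  by apply: generates_extension => //; rewrite cat_take_drop.
by rewrite /= size_cat !size_map -size_cat cat_take_drop.
Qed.

Theorem theorem1 (n : nat) (A : finType) (T : rel A) (a b : A) :
  1 <= n -> #|A| = n.+2 -> tournament T -> a != b ->
  forall vn : nat, is_v (@subT A a b T) vn ->
  forall vn2 : nat, is_v T vn2 -> vn2 <= vn + 2.
Proof.
move=> _ _ tourT ab vn [[U [genU <-]] _] vn2 [_ minT].
have [U' [genU' oddU' leU']] := generates_odd (tournament_subT a b tourT) genU.
have [P [genP size_P]] := extension_exists tourT ab oddU' genU'.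
by apply: leq_trans (minT P genP) _; rewrite size_P addn2 !ltnS.
Qed.
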